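(* Under Assumptions 1–2, assume $r_\ell<\min\{m_\ell,n_\ell\}$ for all $\ell$ and $\Delta>0$. Let $T$ be an integer with $T\ge 64/(3\underline{\delta})$ and choose $\beta_1=1$, $\tau=\lceil 64/(3\underline{\delta}\beta_1)\rceil$, and $\eta=\Big(4L+\sqrt{\tfrac{80L^2}{3\underline{\delta}\beta_1^2}}+\sqrt{\tfrac{80\tau^2L^2}{3\underline{\delta}}}+\sqrt{\tfrac{16\tau L^2}{3\beta_1}}\Big)^{-1}$. Then GaLore using deterministic gradients and MSGD with momentum projection satisfies $\frac1T\sum_{t=0}^{T-1}\|\nabla f(x^{(t)})\|_2^2\le C\,\frac{L\Delta}{\underline{\delta}^{5/2}T}$ for an absolute constant $C$.
   Context: Parameters $x=(\mathrm{vec}(X_1)^\top,\dots,\mathrm{vec}(X_{N_L})^\top)^\top\in\mathbb{R}^d$, $X_\ell\in\mathbb{R}^{m_\ell\times n_\ell}$; $\nabla_\ell$ is the gradient w.r.t. $X_\ell$. Assumption 1: $\inf f>-\infty$. Assumption 2: $\nabla f$ is $L$-Lipschitz in $\|\cdot\|_2$. $\Delta=f(x^{(0)})-\inf_x f(x)$, $\delta_\ell=r_\ell/\min\{m_\ell,n_\ell\}$, $\underline\delta=\min_\ell\delta_\ell$. Algorithm (GaLore/GoLore with MSGD and momentum projection, ''MP''): inputs $x^{(0)}$, $\eta>0$, integer $\tau\ge1$, $\beta_1\in(0,1]$, ranks $r_\ell$; $M_\ell^{(-1)}=0$. For $t=0,\dots,T-1$ and each $\ell$: obtain a gradient matrix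 $G_\ell^{(t)}$ (variant-dependent). If $t\equiv0\pmod\tau$, choose new $P_\ell^{(t)}\in\mathbb{R}^{m_\ell\times r_\ell}$, $Q_\ell^{(t)}\in\mathbb{R}^{n_\ell\times r_\ell}$: in GaLore take an SVD $G_\ell^{(t)}=U\Sigma V^\top$ (singular values nonincreasing) and $P_\ell^{(t)}=U[:,:r_\ell]$, $Q_\ell^{(t)}=V[:,:r_\ell]$; in GoLore sample $P_\ell^{(t)}$, $Q_\ell^{(t)}$ uniformly (Haar) from the Stiefel manifolds $\mathrm{St}_{m_\ell,r_\ell}$, $\mathrm{St}_{n_\ell,r_\ell}$ (where $\mathrm{St}_{m,r}=\{P\in\mathbb{R}^{m\times r}:P^\top P=I_r\}$), independently of everything else. Otherwise $P_\ell^{(t)}=P_\ell^{(t-1)}$, $Q_\ell^{(t)}=Q_\ell^{(t-1)}$. If $m_\ell\le n_\ell$: $M_\ell^{(t)}=(1-\beta_1)(P_\ell^{(t)})^\top P_\ell^{(t-1)}M_\ell^{(t-1)}+\beta_1(P_\ell^{(t)})^\top G_\ell^{(t)}$ and $X_\ell^{(t+1)}=X_\ell^{(t)}-\eta P_\ell^{(t)}M_\ell^{(t)}$. If $m_\ell>n_\ell$: $M_\ell^{(t)}=(1-\beta_1)M_\ell^{(t-1)}(Q_\ell^{(t-1)})^\top Q_\ell^{(t)}+\beta_1G_\ell^{(t)}Q_\ell^{(t)}$ and $X_\ell^{(t+1)}=X_\ell^{(t)}-\eta M_\ell^{(t)}(Q_\ell^{(t)})^\top$. (At $t=0$ the term involving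 $M^{(-1)}=0$ vanishes.) Deterministic variant: $G_\ell^{(t)}=\nabla_\ell f(x^{(t)})$ for all $t$, with GaLore projections. *)

From HB Require Import structures.
From mathcomp Require Import all_boot all_order all_algebra.
From mathcomp Require Import all_classical all_reals all_analysis.
Set Implicit Arguments. Unset Strict Implicit. Unset Printing Implicit Defensive.
Import Order.TTheory GRing.Theory Num.Theory.
Local Open Scope ring_scope.

Section Params.
Variables (R : realType) (NL : nat) (m n : 'I_NL -> nat).

(* The parameter x = (vec(X_1),...,vec(X_NL)), stored layerwise. *)
Definition param := forall l : 'I_NL, 'M[R]_(m l, n l).

Definition padd (x y : param) : param := fun l => x l + y l.
Definition psub (x y : param) : param := fun l => x l - y l.
Definition pscale (a : R) (x : param) : param := fun l => a *: x l.

Definition pinner (x y : param) : R :=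
  \sum_(l < NL) \sum_(i < m l) \sum_(j < n l) x l i j * y l i j.

Definition psqnorm (x : param) : R := pinner x x.
Definition pnorm (x : param) : R := Num.sqrt (psqnorm x).

Definition is_gradient (f : param -> R) (G : param -> param) : Prop :=
  forall x v : param,
    is_derive (0 : R) (1 : R) (fun t : R => f (padd x (pscale t v))) (pinner (G x) v).

Definition lipschitz_grad (G : param -> param) (L : R) : Prop :=
  forall x y : param, pnorm (psub (G x) (G y)) <= L * pnorm (psub x y).

Definition bounded_below (f : param -> R) : Prop :=
  exists c : R, forall x : param, c <= f x.

Definition Delta (f : param -> R) (x0 : param) : R :=
  f x0 - inf (range f).
End Params.

Definition is_svd (R : realType) (p q : nat) (G : 'M[R]_(p, q))
    (U : 'M[R]_p) (S : 'M[R]_(p, q)) (V : 'M[R]_q) : Prop :=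
  U^T *m U = 1%:M /\ V^T *m V = 1%:M /\
      (forall (i : 'I_p) (j : 'I_q), (i : nat) <> j -> S i j = 0) /\
      (forall (i : 'I_p) (j : 'I_q), 0 <= S i j) /\
      (forall (i1 : 'I_p) (j1 : 'I_q) (i2 : 'I_p) (j2 : 'I_q),
          (i1 : nat) = j1 -> (i2 : nat) = j2 -> (i1 <= i2)%N -> S i2 j2 <= S i1 j1) /\
    G = U *m S *m V^T.

(* GaLore projection choice: P = U[:, :r], Q = V[:, :r] for some SVD of G. *)
Definition galore_proj (R : realType) (p q r : nat) (G : 'M[R]_(p, q))
    (P : 'M[R]_(p, r)) (Q : 'M[R]_(q, r)) : Prop :=
  exists U S V, is_svd G U S V /\
    P = U *m (pid_mx r : 'M[R]_(p, r)) /\ Q = V *m (pid_mx r : 'M[R]_(q, r)).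

(* The momentum for layer l is Mp (shape r x n, used when m <= n) or
   Mq (shape m x r, used when m > n); the unused one is irrelevant.
   M^(-1) = 0, so at t = 0 the momentum-carrying term vanishes. *)
Definition galore_mp_det_run (R : realType) (NL : nat) (m n r : 'I_NL -> nat)
    (G : param R m n -> param R m n) (eta beta1 : R) (tau : nat) (x0 : param R m n)
    (x : nat -> param R m n)
    (P : nat -> forall l : 'I_NL, 'M[R]_(m l, r l))
    (Q : nat -> forall l : 'I_NL, 'M[R]_(n l, r l))
    (Mp : nat -> forall l : 'I_NL, 'M[R]_(r l, n l))
    (Mq : nat -> forall l : 'I_NL, 'M[R]_(m l, r l)) : Prop :=
  x 0%N = x0 /\
  forall (t : nat) (l : 'I_NL),
    let Gt := G (x t) l in
    (if (t %% tau == 0)%N then galore_proj Gt (P t l) (Q t l)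
     else (P t l = P t.-1 l /\ Q t l = Q t.-1 l)) /\
    (if (m l <= n l)%N then
       Mp t l = (if t is t'.+1 then (1 - beta1) *: ((P t l)^T *m P t' l *m Mp t' l)
                 else 0) + beta1 *: ((P t l)^T *m Gt) /\
       x t.+1 l = x t l - eta *: (P t l *m Mp t l)
     else
       Mq t l = (if t is t'.+1 then (1 - beta1) *: (Mq t' l *m (Q t' l)^T *m Q t l)
                 else 0) + beta1 *: (Gt *m Q t l) /\
       x t.+1 l = x t l - eta *: (Mq t l *m (Q t l)^T)).

(* underline delta = min_l r_l / min(m_l, n_l)  (NL >= 1; each delta_l <= 1) *)
Definition delta_min (R : realType) (NL : nat) (m n r : 'I_NL -> nat) : R :=
  \big[Order.min/1]_(l < NL) ((r l)%:R / (minn (m l) (n l))%:R).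

(* With [beta1 = 1] the method is projected gradient descent
   [x_{t+1} = x_t - eta Pi_t grad f(x_t)], where [Pi_t] projects every layer
   onto the top-[r] singular subspace of the gradient taken at the last reset
   [s_t = t - t mod tau].  Smoothness makes each step decrease [f] by
   [3/4 eta |Pi_t grad f(x_t)|^2], so these projected gradients are summable
   against [Delta].  At the reset point the SVD projection keeps a [delta]
   share of [|grad f(x_{s_t})|^2], and the iterate has drifted from [x_{s_t}]
   by the steps of the current window only; by Lipschitz continuity
   [delta |grad f(x_t)|^2 <= 4 |Pi_t grad f(x_t)|^2 + 6 L^2 |x_{s_t} - x_t|^2].
   Summed over windows the drift costs a factor [(tau eta)^2], absorbed by
   [eta L tau <= 1], and finally [1/eta = O(L delta^(-3/2))]. *)

From HB Require Import structures.
From mathcomp Require Import all_boot all_order all_algebra.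
From mathcomp Require Import all_classical all_reals all_analysis.
From mathcomp Require Import ring lra.
Set Implicit Arguments. Unset Strict Implicit. Unset Printing Implicit Defensive.
Import Order.TTheory GRing.Theory Num.Theory.
Local Open Scope ring_scope.

Section ParamGeometry.
Variables (R : realType) (NL : nat) (m n : 'I_NL -> nat).
Implicit Types (x y u v : param R m n) (F : forall l : 'I_NL, 'I_(m l) -> 'I_(n l) -> R).

Definition psum F : R := \sum_(l < NL) \sum_(i < m l) \sum_(j < n l) F l i j.

Lemma ler_psum F1 F2 : (forall l i j, F1 l i j <= F2 l i j) -> psum F1 <= psum F2.
Proof.
by move=> H; apply: ler_sum => l _; apply: ler_sum => i _; apply: ler_sum => j _.
Qed.

Lemma psumD F1 F2 : psum (fun l i j => F1 l i j + F2 l i j) = psum F1 + psum F2.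
Proof.
rewrite /psum -big_split; apply: eq_bigr => l _; rewrite -big_split.
by apply: eq_bigr => i _; rewrite -big_split.
Qed.

Lemma psumB F1 F2 : psum (fun l i j => F1 l i j - F2 l i j) = psum F1 - psum F2.
Proof.
rewrite /psum -sumrB; apply: eq_bigr => l _; rewrite -sumrB.
by apply: eq_bigr => i _; rewrite -sumrB.
Qed.

Lemma psumZ c F : psum (fun l i j => c * F l i j) = c * psum F.
Proof.
rewrite /psum mulr_sumr; apply: eq_bigr => l _; rewrite mulr_sumr.
by apply: eq_bigr => i _; rewrite mulr_sumr.
Qed.

Lemma eq_psum F1 F2 : (forall l i j, F1 l i j = F2 l i j) -> psum F1 = psum F2.
Proof.
by move=> H; apply: eq_bigr => l _; apply: eq_bigr => i _; apply: eq_bigr => j _.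
Qed.

Lemma pinnerE x y : pinner x y = psum (fun l i j => x l i j * y l i j).
Proof. by []. Qed.

Lemma param_ext x y : (forall l i j, x l i j = y l i j) -> x = y.
Proof.
by move=> H; apply: functional_extensionality_dep => l; apply/matrixP => i j.
Qed.

Lemma psqnorm_ge0 x : 0 <= psqnorm x.
Proof.
apply: sumr_ge0 => l _; apply: sumr_ge0 => i _; apply: sumr_ge0 => j _.
by rewrite -expr2 sqr_ge0.
Qed.

Lemma psqnorm_scale e x : psqnorm (pscale e x) = e ^+ 2 * psqnorm x.
Proof.
rewrite /psqnorm !pinnerE -psumZ; apply: eq_psum => l i j.
by rewrite /pscale !mxE; ring.
Qed.

Lemma psqnorm_subC x y : psqnorm (psub x y) = psqnorm (psub y x).
Proof. by rewrite /psqnorm !pinnerE; apply: eq_psum => l i j; rewrite /psub !mxE; ring. Qed.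

Lemma psqnorm_subxx x : psqnorm (psub x x) = 0.
Proof.
rewrite /psqnorm pinnerE (@eq_psum _ (fun _ _ _ => 0 * 0)); last first.
  by move=> l i j; rewrite /psub !mxE subrr.
by rewrite psumZ mul0r.
Qed.

Lemma pinnerBl x y u : pinner (psub x y) u = pinner x u - pinner y u.
Proof. by rewrite !pinnerE -psumB; apply: eq_psum => l i j; rewrite /psub !mxE mulrBl. Qed.

Lemma pinnerZr c x y : pinner x (pscale c y) = c * pinner x y.
Proof. by rewrite !pinnerE -psumZ; apply: eq_psum => l i j; rewrite /pscale mxE; ring. Qed.

Lemma pinner_le_amgm c x y : 2 * c * pinner x y <= psqnorm x + c ^+ 2 * psqnorm y.
Proof.
rewrite /psqnorm !pinnerE -!psumZ -psumD; apply: ler_psum => l i j.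
by move: (x l i j) (y l i j) => a b; have := sqr_ge0 (a - c * b); nra.
Qed.

Lemma psqnorm_le_split x y : psqnorm x <= 2 * psqnorm y + 2 * psqnorm (psub x y).
Proof.
rewrite /psqnorm !pinnerE -!psumZ -psumD; apply: ler_psum => l i j.
rewrite /psub !mxE; move: (x l i j) (y l i j) => a b.
by have := sqr_ge0 (a - 2 * b); nra.
Qed.

(* Young's inequality [(a - b)^2 <= (1 + 1/k) a^2 + (1 + k) b^2], multiplied by [k]. *)
Lemma psqnorm_sub_young k x y : 0 <= k ->
  k * psqnorm (psub x y) <= (k + 1) * psqnorm x + k * (k + 1) * psqnorm y.
Proof.
move=> k0; rewrite /psqnorm !pinnerE -!psumZ -psumD; apply: ler_psum => l i j.
rewrite /psub !mxE; move: (x l i j) (y l i j) => a b.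
by have := sqr_ge0 (a + k * b); nra.
Qed.

End ParamGeometry.

Section Frobenius.
Variable R : realType.

Definition frob (p q : nat) (A B : 'M[R]_(p, q)) : R :=
  \sum_(i < p) \sum_(j < q) A i j * B i j.

Lemma frob_tr p q (A B : 'M[R]_(p, q)) : frob A B = \tr (A *m B^T).
Proof.
rewrite /frob /mxtrace; apply: eq_bigr => i _; rewrite mxE.
by apply: eq_bigr => j _; rewrite !mxE.
Qed.

Lemma frob_ge0 p q (A : 'M[R]_(p, q)) : 0 <= frob A A.
Proof. by apply: sumr_ge0 => i _; apply: sumr_ge0 => j _; rewrite -expr2 sqr_ge0. Qed.

Lemma frob_trmx p q (A B : 'M[R]_(p, q)) : frob A^T B^T = frob A B.
Proof. by rewrite !frob_tr -mxtrace_tr trmx_mul !trmxK mxtrace_mulC. Qed.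

Lemma frob_subsub p q (A B : 'M[R]_(p, q)) :
  frob (A - B) (A - B) = frob A A - 2 * frob A B + frob B B.
Proof.
rewrite !frob_tr linearB /= mulmxBl !mulmxBr !linearB /=.
have -> : \tr (B *m A^T) = \tr (A *m B^T) by rewrite -mxtrace_tr trmx_mul trmxK.
ring.
Qed.

Lemma frob_mulmx_orthor p q (V : 'M[R]_q) (B : 'M[R]_(p, q)) :
  V^T *m V = 1%:M -> frob (B *m V^T) (B *m V^T) = frob B B.
Proof.
by move=> hV; rewrite !frob_tr trmx_mul trmxK -!mulmxA [V^T *m _]mulmxA hV mul1mx.
Qed.

Lemma frob_mulmx_orthol p q (U : 'M[R]_p) (X : 'M[R]_(p, q)) :
  U^T *m U = 1%:M -> frob (U *m X) (U *m X) = frob X X.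
Proof.
by move=> hU; rewrite !frob_tr trmx_mul -!mulmxA mxtrace_mulC -!mulmxA hU mulmx1.
Qed.

Lemma mxtrace_rot4 a b c d (W : 'M[R]_(a, b)) (X : 'M[R]_(b, c))
    (Y : 'M[R]_(c, d)) (Z : 'M[R]_(d, a)) :
  \tr (W *m (X *m (Y *m Z))) = \tr (X *m (Y *m (Z *m W))).
Proof. by rewrite mxtrace_mulC !mulmxA. Qed.

Section OrthoProjection.
Variables (p q k : nat) (P : 'M[R]_(p, k)).
Hypothesis P_orth : P^T *m P = 1%:M.

Lemma frob_orthoproj_self (A : 'M[R]_(p, q)) :
  frob A (P *m P^T *m A) = frob (P *m P^T *m A) (P *m P^T *m A).
Proof.
rewrite !frob_tr !trmx_mul !trmxK -!mulmxA mxtrace_mulC -!mulmxA.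
by rewrite [in RHS]mxtrace_mulC -!mulmxA P_orth mulmx1 mxtrace_rot4 mxtrace_rot4.
Qed.

Lemma frob_orthoproj_le (A : 'M[R]_(p, q)) :
  frob (P *m P^T *m A) (P *m P^T *m A) <= frob A A.
Proof.
have := frob_ge0 (A - P *m P^T *m A).
by rewrite frob_subsub frob_orthoproj_self; lra.
Qed.

Lemma frob_orthoproj_coord (A : 'M[R]_(p, q)) :
  frob (P *m P^T *m A) (P *m P^T *m A) = frob (P^T *m A) (P^T *m A).
Proof.
rewrite !frob_tr !trmx_mul !trmxK -!mulmxA mxtrace_rot4.
by rewrite -!mulmxA P_orth mulmx1.
Qed.

End OrthoProjection.
End Frobenius.

Section LayerProjection.
Variable R : realType.

Definition layer_proj (p q k : nat) (wide : bool) (P : 'M[R]_(p, k))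
    (Q : 'M[R]_(q, k)) (A : 'M[R]_(p, q)) : 'M[R]_(p, q) :=
  if wide then P *m P^T *m A else A *m Q *m Q^T.

Variables (p q k : nat) (wide : bool) (P : 'M[R]_(p, k)) (Q : 'M[R]_(q, k)).
Hypotheses (P_orth : P^T *m P = 1%:M) (Q_orth : Q^T *m Q = 1%:M).

Lemma mulmx_orthoproj_trmx (A : 'M[R]_(p, q)) : A *m Q *m Q^T = (Q *m Q^T *m A^T)^T.
Proof. by rewrite !trmx_mul !trmxK mulmxA. Qed.

Lemma frob_layer_proj_self (A : 'M[R]_(p, q)) :
  frob A (layer_proj wide P Q A) = frob (layer_proj wide P Q A) (layer_proj wide P Q A).
Proof.
rewrite /layer_proj; case: wide; first exact: frob_orthoproj_self.
by rewrite mulmx_orthoproj_trmx -{1}(trmxK A) !frob_trmx frob_orthoproj_self.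
Qed.

Lemma frob_layer_proj_le (A : 'M[R]_(p, q)) :
  frob (layer_proj wide P Q A) (layer_proj wide P Q A) <= frob A A.
Proof.
rewrite /layer_proj; case: wide; first exact: frob_orthoproj_le.
by rewrite mulmx_orthoproj_trmx frob_trmx -(frob_trmx A); apply: frob_orthoproj_le.
Qed.

Lemma layer_projB (A B : 'M[R]_(p, q)) :
  layer_proj wide P Q (A - B) = layer_proj wide P Q A - layer_proj wide P Q B.
Proof. by rewrite /layer_proj; case: wide; rewrite ?mulmxBr ?mulmxBl. Qed.

End LayerProjection.

Lemma sum_nonincr_prefix (R : realType) (s : nat -> R) (p r : nat) :
  (0 < r)%N -> (r <= p)%N -> {in gtn p &, forall i j, (i <= j)%N -> s j <= s i} ->
  r%:R * \sum_(0 <= k < p) s k <= p%:R * \sum_(0 <= k < r) s k.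
Proof.
move=> r0 rp mono.
have smin : {in gtn p, forall k, (r <= k)%N -> s k <= s r.-1}.
  move=> k kp rk; apply: mono => //; last exact: leq_trans (leq_pred r) rk.
  by rewrite inE (leq_trans _ rp) // prednK.
have smax : {in gtn r, forall k, s r.-1 <= s k}.
  move=> k kr; apply: mono; rewrite ?inE; first exact: leq_trans kr rp.
    by rewrite (leq_trans _ rp) // prednK.
  by rewrite -ltnS prednK.
have tail : \sum_(r <= k < p) s k <= (p - r)%:R * s r.-1.
  apply: (@le_trans _ _ (\sum_(r <= k < p) s r.-1)); last by rewrite sumr_const_nat mulr_natl.
  by rewrite !big_nat; apply: ler_sum => k /andP[rk kp]; apply: smin.
have head : r%:R * s r.-1 <= \sum_(0 <= k < r) s k.
  apply: (@le_trans _ _ (\sum_(0 <= k < r) s r.-1)); first by rewrite sumr_const_nat subn0 mulr_natl.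
  by rewrite !big_nat; apply: ler_sum => k /andP[_ kr]; apply: smax.
rewrite (@big_cat_nat _ _ _ r 0 p) //= natrB // in tail *.
have hr : (0 : R) <= r%:R by [].
have hrp : (r%:R : R) <= p%:R by rewrite ler_nat.
move: tail head hr hrp; set A := \sum_(0 <= k < r) s k; set B := \sum_(r <= k < p) s k.
move: (r%:R : R) (p%:R : R) (s r.-1) => rr pp c tail head hr hrp.
have : rr * B <= rr * ((pp - rr) * c) by apply: ler_wpM2l.
nra.
Qed.

Section SingularValues.
Variable R : realType.

Lemma rowsq_diag p q (S : 'M[R]_(p, q))
    (S_diag : forall (i : 'I_p) (j : 'I_q), (i : nat) <> j -> S i j = 0)
    (i : 'I_p) (j : 'I_q) :
  (i : nat) = j -> \sum_(j' < q) S i j' * S i j' = S i j * S i j.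
Proof.
move=> eij; rewrite (bigD1 j) //= big1 ?addr0 // => j' /eqP nj'.
by rewrite S_diag ?mul0r // => e; apply: nj'; apply: ord_inj; rewrite -e eij.
Qed.

Lemma pid_mulmxE p q r (rp : (r <= p)%N) (S : 'M[R]_(p, q)) (i : 'I_r) (j : 'I_q) :
  ((pid_mx r : 'M[R]_(r, p)) *m S) i j = S (widen_ord rp i) j.
Proof.
rewrite mxE (bigD1 (widen_ord rp i)) //= big1 ?addr0; first by rewrite mxE eqxx ltn_ord mul1r.
move=> k /eqP nk; rewrite mxE; case: eqP => [e|_]; last by rewrite mul0r.
by case: nk; apply: val_inj; rewrite /= e.
Qed.

Lemma frob_pid_diag_ge p q r (S : 'M[R]_(p, q)) :
  (p <= q)%N -> (0 < r)%N -> (r <= p)%N ->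
  (forall (i : 'I_p) (j : 'I_q), (i : nat) <> j -> S i j = 0) ->
  (forall (i : 'I_p) (j : 'I_q), 0 <= S i j) ->
  (forall (i1 : 'I_p) (j1 : 'I_q) (i2 : 'I_p) (j2 : 'I_q),
      (i1 : nat) = j1 -> (i2 : nat) = j2 -> (i1 <= i2)%N -> S i2 j2 <= S i1 j1) ->
  r%:R / p%:R * frob S S <= frob ((pid_mx r : 'M[R]_(r, p)) *m S) (pid_mx r *m S).
Proof.
case: p S => [|p] S pq r0 rp S_diag S_ge0 S_mono; first by move: (leq_trans r0 rp).
pose s k := \sum_(j < q) S (inord k) j * S (inord k) j.
have frobS : frob S S = \sum_(0 <= k < p.+1) s k.
  by rewrite big_mkord; apply: eq_bigr => i _; rewrite /s inord_val.
have frob_pidS : frob ((pid_mx r : 'M[R]_(r, p.+1)) *m S) (pid_mx r *m S)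
    = \sum_(0 <= k < r) s k.
  rewrite big_mkord; apply: eq_bigr => i _; apply: eq_bigr => j _.
  rewrite !pid_mulmxE; congr (S _ j * S _ j); apply: val_inj;
  by rewrite /= inordK // (leq_trans (ltn_ord i) rp).
rewrite frobS frob_pidS mulrAC ler_pdivrMr ?ltr0n // [X in _ <= X]mulrC.
apply: sum_nonincr_prefix => // i j; rewrite !inE => ip jp ij.
have iq : (i < q)%N := leq_trans ip pq.
have jq : (j < q)%N := leq_trans jp pq.
rewrite /s (rowsq_diag S_diag (j := Ordinal jq)) /= ?inordK //.
rewrite (rowsq_diag S_diag (j := Ordinal iq)) /= ?inordK //.
have := S_mono (inord i) (Ordinal iq) (inord j) (Ordinal jq).
rewrite !inordK // => /(_ erefl erefl ij) Sij.
by apply: ler_pM => //; apply: S_ge0.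
Qed.

Lemma is_svd_trmx p q (G : 'M[R]_(p, q)) U S V : is_svd G U S V -> is_svd G^T V S^T U.
Proof.
move=> [hU [hV [hd [hnn [hmono ->]]]]]; do 2!split => //.
split; first by move=> i j ij; rewrite mxE hd // => e; apply: ij.
split; first by move=> i j; rewrite mxE.
split; first by move=> i1 j1 i2 j2 e1 e2 le; rewrite !mxE; apply: hmono; rewrite -?e1 -?e2.
by rewrite !trmx_mul trmxK mulmxA.
Qed.

Lemma frob_svd_topr_ge p q r (G : 'M[R]_(p, q)) U S V :
  (p <= q)%N -> (0 < r)%N -> (r <= p)%N -> is_svd G U S V ->
  r%:R / p%:R * frob G G <=
  frob ((U *m (pid_mx r : 'M[R]_(p, r)))^T *m G) ((U *m (pid_mx r : 'M[R]_(p, r)))^T *m G).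
Proof.
move=> pq r0 rp [hU [hV [hd [hnn [hmono ->]]]]].
have -> : (U *m (pid_mx r : 'M[R]_(p, r)))^T *m (U *m S *m V^T)
    = ((pid_mx r : 'M[R]_(r, p)) *m S) *m V^T.
  by rewrite trmx_mul tr_pid_mx -!mulmxA [U^T *m _]mulmxA hU mul1mx.
rewrite !frob_mulmx_orthor // frob_mulmx_orthol //.
exact: frob_pid_diag_ge.
Qed.

Lemma galore_proj_orthonormal p q r (G : 'M[R]_(p, q)) (P : 'M[R]_(p, r))
    (Q : 'M[R]_(q, r)) :
  (r <= p)%N -> (r <= q)%N -> galore_proj G P Q ->
  P^T *m P = 1%:M /\ Q^T *m Q = 1%:M.
Proof.
move=> rp rq [U [S [V [[hU [hV _]] [-> ->]]]]].
rewrite !trmx_mul !tr_pid_mx -!mulmxA [U^T *m _]mulmxA [V^T *m _]mulmxA hU hV !mul1mx.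
by rewrite !pid_mx_id ?pid_mx_1.
Qed.

Lemma frob_galore_layer_proj_ge p q r (G : 'M[R]_(p, q)) (P : 'M[R]_(p, r))
    (Q : 'M[R]_(q, r)) :
  (0 < r)%N -> (r <= minn p q)%N -> galore_proj G P Q ->
  r%:R / (minn p q)%:R * frob G G
    <= frob (layer_proj (p <= q)%N P Q G) (layer_proj (p <= q)%N P Q G).
Proof.
move=> r0; rewrite leq_min => /andP[rp rq] hg.
have [hP hQ] := galore_proj_orthonormal rp rq hg.
case: hg => [U [S [V [hsvd [eP eQ]]]]].
rewrite /layer_proj; case: ifP => pq.
  rewrite frob_orthoproj_coord // eP (minn_idPl pq).
  exact: frob_svd_topr_ge hsvd.
have qp : (q <= p)%N by apply: ltnW; rewrite ltnNge pq.
rewrite mulmx_orthoproj_trmx frob_trmx frob_orthoproj_coord // eQ -(frob_trmx G).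
rewrite (minn_idPr qp); exact: frob_svd_topr_ge (is_svd_trmx hsvd).
Qed.

End SingularValues.

Section ParamProjection.
Variables (R : realType) (NL : nat) (m n r : 'I_NL -> nat).
Variables (P : forall l, 'M[R]_(m l, r l)) (Q : forall l, 'M[R]_(n l, r l)).
Implicit Types h : param R m n.

Definition pproj h : param R m n :=
  fun l => layer_proj (m l <= n l)%N (P l) (Q l) (h l).

Lemma pprojB h1 h2 : pproj (psub h1 h2) = psub (pproj h1) (pproj h2).
Proof. by apply: functional_extensionality_dep => l; rewrite /pproj /psub layer_projB. Qed.

Lemma psqnorm_pproj_ge dlt h :
  (forall l, (0 < r l)%N /\ (r l < minn (m l) (n l))%N) ->
  (forall l, dlt <= (r l)%:R / (minn (m l) (n l))%:R) ->
  (forall l, galore_proj (h l) (P l) (Q l)) ->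
  dlt * psqnorm h <= psqnorm (pproj h).
Proof.
move=> hr hdlt hg; rewrite /psqnorm /pinner mulr_sumr; apply: ler_sum => l _.
have [r0 rmin] := hr l.
apply: le_trans (frob_galore_layer_proj_ge r0 (ltnW rmin) (hg l)).
by apply: ler_wpM2r; [exact: frob_ge0 | exact: hdlt].
Qed.

Hypothesis PQ_orth : forall l, (P l)^T *m P l = 1%:M /\ (Q l)^T *m Q l = 1%:M.

Lemma pinner_pproj_self h : pinner h (pproj h) = psqnorm (pproj h).
Proof.
apply: eq_bigr => l _; have [hP hQ] := PQ_orth l.
exact: frob_layer_proj_self hP hQ (h l).
Qed.

Lemma psqnorm_pproj_le h : psqnorm (pproj h) <= psqnorm h.
Proof.
apply: ler_sum => l _; have [hP hQ] := PQ_orth l.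
exact: frob_layer_proj_le hP hQ (h l).
Qed.

End ParamProjection.

Section Smoothness.
Variables (R : realType) (NL : nat) (m n : 'I_NL -> nat).
Variables (f : param R m n -> R) (G : param R m n -> param R m n) (L : R).
Hypothesis f_grad : is_gradient f G.
Hypothesis G_lip : lipschitz_grad G L.
Implicit Types x y v : param R m n.

(* [is_gradient] only speaks of derivatives at [0]; move the base point to [x + t v]. *)
Lemma is_derive_line x v (t : R) :
  is_derive t (1 : R) (fun s => f (padd x (pscale s v))) (pinner (G (padd x (pscale t v))) v).
Proof.
have [d1 d2] := f_grad (padd x (pscale t v)) v.
set phi := fun s => f (padd x (pscale s v)).
set psi := fun s => f (padd (padd x (pscale t v)) (pscale s v)).
have E : (fun h : R => h^-1 *: ((phi \o shift t) (h *: (1 : R)) - phi t)) =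
         (fun h : R => h^-1 *: ((psi \o shift 0) (h *: (1 : R)) - psi 0)).
  apply: funext => h; rewrite /phi /psi /=.
  congr (_ *: (f _ - f _)); apply: param_ext => l i j; rewrite /padd /pscale !mxE; ring.
by split; [move: d1; rewrite /derivable -/psi -E | move: d2; rewrite /derive -/psi -E].
Qed.

Lemma lipschitz_grad_sq x y : psqnorm (psub (G x) (G y)) <= L ^+ 2 * psqnorm (psub x y).
Proof.
have h := G_lip x y; rewrite /pnorm in h.
have a0 := sqrtr_ge0 (psqnorm (psub (G x) (G y))).
have := ler_pM a0 a0 h h.
by rewrite -!expr2 sqr_sqrtr ?psqnorm_ge0 // exprMn sqr_sqrtr ?psqnorm_ge0.
Qed.

(* The descent lemma, with a free weight [c] in place of [L] so that it also
   applies when [L = 0]. *)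
Lemma smooth_descent c x v : 0 < c ->
  2 * c * f (padd x v) <= 2 * c * f x + 2 * c * pinner (G x) v + (L ^+ 2 + c ^+ 2) * psqnorm v.
Proof.
move=> c0.
set phi := fun s => f (padd x (pscale s v)).
have hd s : is_derive s (1 : R) phi (pinner (G (padd x (pscale s v))) v).
  exact: is_derive_line.
have hc := @derivable_within_continuous R _ phi `[0, 1]
  (fun s _ => @ex_derive _ _ _ _ _ _ _ (hd s)).
have [s s01 hmvt] := MVT_segment ler01 (fun s _ => hd s) hc.
have phi1 : phi 1 = f (padd x v).
  by rewrite /phi; congr f; apply: param_ext => l i j; rewrite /padd /pscale !mxE mul1r.
have phi0 : phi 0 = f x.
  by rewrite /phi; congr f; apply: param_ext => l i j; rewrite /padd /pscale !mxE mul0r addr0.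
rewrite phi1 phi0 subr0 mulr1 in hmvt.
have [s0 s1] : 0 <= s /\ s <= 1 by move: s01; rewrite in_itv /= => /andP.
set w := psub (G (padd x (pscale s v))) (G x).
have -> : f (padd x v) = f x + pinner (G x) v + pinner w v.
  by rewrite /w pinnerBl -hmvt; ring.
have hw : psqnorm w <= L ^+ 2 * psqnorm v.
  apply: le_trans (lipschitz_grad_sq _ _) _.
  have -> : psub (padd x (pscale s v)) x = pscale s v.
    by apply: param_ext => l i j; rewrite /padd /psub /pscale !mxE; ring.
  rewrite psqnorm_scale mulrA ler_wpM2r ?psqnorm_ge0 //.
  by rewrite -[X in _ <= X]mulr1 ler_wpM2l ?sqr_ge0 // expr_le1.
have := pinner_le_amgm c w v.
lra.
Qed.

Lemma lipschitz_grad_ge0 (l : 'I_NL) : (0 < m l)%N -> (0 < n l)%N -> 0 <= L.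
Proof.
move=> m0 n0.
pose one : param R m n := fun l => const_mx 1.
pose zero : param R m n := fun l => 0.
have one_pos : 0 < psqnorm (psub one zero).
  rewrite /psqnorm /pinner (bigD1 l) //= ltr_pwDl //.
    rewrite (eq_bigr (fun _ => \sum_(j < n l) 1)); last first.
      by move=> i _; apply: eq_bigr => j _; rewrite /psub !mxE subr0 mulr1.
    by rewrite sumr_const card_ord sumr_const card_ord -mulrnA ltr0n muln_gt0 m0 n0.
  by apply: sumr_ge0 => k _; apply: frob_ge0.
have := G_lip one zero; rewrite /pnorm => hlip.
have := le_trans (sqrtr_ge0 _) hlip.
by rewrite pmulr_lge0 // sqrtr_gt0.
Qed.

(* With [L = 0] the weight [c] of [smooth_descent] can be taken so small that a
   nonzero gradient would push [f] below its lower bound. *)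
Lemma lipschitz0_psqnorm_grad_le0 z : L = 0 -> bounded_below f -> psqnorm (G z) <= 0.
Proof.
move=> L0 [b hb]; rewrite leNgt; apply/negP => g_pos.
set g2 := psqnorm (G z) in g_pos.
have hbz := hb z.
set s := 2 * (f z - b + 1) / g2.
have s_pos : 0 < s by rewrite divr_gt0 //; lra.
have si : 0 < s^-1 by rewrite invr_gt0.
have h := smooth_descent z (pscale (- s) (G z)) si.
rewrite pinnerZr psqnorm_scale -/g2 sqrrN L0 in h.
have := ler_wpM2l (ltW s_pos) h.
have -> : s * (2 * s^-1 * f (padd z (pscale (- s) (G z)))) = 2 * f (padd z (pscale (- s) (G z))).
  by field; rewrite gt_eqF.
have -> : s * (2 * s^-1 * f z + 2 * s^-1 * (- s * pinner (G z) (G z))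
   + (0 ^+ 2 + s^-1 ^+ 2) * (s ^+ 2 * g2)) = 2 * f z - s * g2.
  by rewrite /g2 /psqnorm; field; rewrite gt_eqF.
have -> : s * g2 = 2 * (f z - b + 1) by rewrite /s; field; rewrite gt_eqF.
have := hb (padd z (pscale (- s) (G z))).
lra.
Qed.

End Smoothness.

Section Windows.
Variable tau : nat.

Definition last_reset t := (t - t %% tau)%N.

Lemma last_reset_dvd t : (tau %| last_reset t)%N.
Proof. by rewrite /last_reset -eqn_mod_dvd ?leq_mod // modn_mod. Qed.

Lemma last_reset0 : last_reset 0 = 0%N.
Proof. by rewrite /last_reset mod0n. Qed.

Lemma last_resetS t : last_reset t.+1 = if (tau %| t.+1)%N then t.+1 else last_reset t.
Proof. by rewrite /last_reset modnS; case: ifP; rewrite ?subn0 ?subSS. Qed.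

Variables (R : realType) (a : nat -> R).
Hypothesis a_ge0 : forall t, 0 <= a t.

Definition window_sum t := \sum_(last_reset t <= k < t) a k.

Lemma window_sumS t : window_sum t.+1 = if (tau %| t.+1)%N then 0 else window_sum t + a t.
Proof.
rewrite /window_sum last_resetS; case: ifP => _; first by rewrite big_geq.
by rewrite big_nat_recr //= leq_subr.
Qed.

Lemma window_sum_ge0 t : 0 <= window_sum t.
Proof. by apply: sumr_ge0 => k _. Qed.

(* Each [a k] lies in fewer than [tau] windows.  The induction invariant prepays
   the [tau - T mod tau] windows, from [T] to the next reset, that still contain
   the current one. *)
Lemma sum_window_sum_le T : (0 < tau)%N ->
  \sum_(t < T) window_sum t <= tau%:R * \sum_(t < T) a t.
Proof.
move=> tau_gt0.
suff : \sum_(t < T) window_sum t + (tau%:R - (T %% tau)%:R) * window_sum T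
         <= tau%:R * \sum_(t < T) a t.
  have : (0 : R) <= tau%:R - (T %% tau)%:R.
    by rewrite subr_ge0 ler_nat ltnW // ltn_pmod.
  by move/mulr_ge0/(_ (window_sum_ge0 T)); lra.
elim: T => [|T IH]; first by rewrite !big_ord0 /window_sum big_geq // !mulr0 addr0.
rewrite !big_ord_recr /= window_sumS modnS mulrDr.
have WT := window_sum_ge0 T; have aT := a_ge0 T.
have : ((T %% tau).+1%:R : R) <= tau%:R by rewrite ler_nat ltn_pmod.
move: IH; set W := \sum_(i < T) _; set A := \sum_(i < T) _.
case: ifP => _; rewrite -natr1 => IH ht.
  rewrite mulr0 addr0.
  have : window_sum T <= (tau%:R - (T %% tau)%:R) * window_sum T.
    by rewrite -[X in X <= _]mul1r ler_wpM2r //; lra.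
  have := mulr_ge0 (ler0n R tau) aT; lra.
move: ht IH; move: ((T %% tau)%:R : R) (tau%:R : R) (ler0n R (T %% tau)) => k tt k0 ht IH.
nra.
Qed.

End Windows.

Section DeterministicRun.
Variables (R : realType) (NL : nat) (m n r : 'I_NL -> nat).
Variables (f : param R m n -> R) (G : param R m n -> param R m n) (L : R).
Variables (x0 : param R m n) (tau : nat) (eta dlt : R) (x : nat -> param R m n).
Variables (P : nat -> forall l : 'I_NL, 'M[R]_(m l, r l))
          (Q : nat -> forall l : 'I_NL, 'M[R]_(n l, r l))
          (Mp : nat -> forall l : 'I_NL, 'M[R]_(r l, n l))
          (Mq : nat -> forall l : 'I_NL, 'M[R]_(m l, r l)).
Hypothesis r_bounds : forall l, (0 < r l)%N /\ (r l < minn (m l) (n l))%N.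
Hypothesis f_lb : bounded_below f.
Hypothesis f_grad : is_gradient f G.
Hypothesis G_lip : lipschitz_grad G L.
Hypothesis L_gt0 : 0 < L.
Hypotheses (dlt_gt0 : 0 < dlt) (dlt_le1 : dlt <= 1).
Hypothesis dlt_le : forall l, dlt <= (r l)%:R / (minn (m l) (n l))%:R.
Hypothesis tau_gt0 : (0 < tau)%N.
Hypothesis eta_gt0 : 0 < eta.
Hypothesis etaL_le : eta * L <= 1 / 4.
Hypothesis etaLtau_le : eta * L * tau%:R <= 1.
Hypothesis run : galore_mp_det_run G eta 1 tau x0 x P Q Mp Mq.

Local Notation anchor t := (x (last_reset tau t)).
Local Notation step_proj t := (pproj (P t) (Q t)).
Local Notation drift t := (psqnorm (psub (anchor t) (x t))).
Let proj_sq t := psqnorm (step_proj t (G (x t))).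

Let proj_sq_ge0 t : 0 <= proj_sq t.
Proof. exact: psqnorm_ge0. Qed.

Lemma run_proj_reset t l : P t l = P (last_reset tau t) l /\ Q t l = Q (last_reset tau t) l.
Proof.
elim: t => [|t IH]; first by rewrite last_reset0.
rewrite last_resetS; case: ifP => dt //.
have [+ _] := run.2 t.+1 l; rewrite /dvdn in dt; rewrite dt => -[-> ->].
exact: IH.
Qed.

Lemma run_galore_proj t l : galore_proj (G (anchor t) l) (P t l) (Q t l).
Proof.
have := run.2 (last_reset tau t) l; have := last_reset_dvd tau t.
rewrite /dvdn => -> [hg _].
by have [-> ->] := run_proj_reset t l.
Qed.

Lemma run_orthonormal t l : (P t l)^T *m P t l = 1%:M /\ (Q t l)^T *m Q t l = 1%:M.
Proof.
have [_] := r_bounds l; rewrite leq_min => /andP[rm rn].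
exact: galore_proj_orthonormal (ltnW rm) (ltnW rn) (run_galore_proj t l).
Qed.

Lemma run_anchor_capture t :
  dlt * psqnorm (G (anchor t)) <= psqnorm (step_proj t (G (anchor t))).
Proof. exact: psqnorm_pproj_ge r_bounds dlt_le (run_galore_proj t). Qed.

(* With [beta1 = 1] the projected momentum is just the projected gradient. *)
Lemma run_step t : x t.+1 = psub (x t) (pscale eta (step_proj t (G (x t)))).
Proof.
apply: functional_extensionality_dep => l.
have [_ +] := run.2 t l; rewrite /pproj /layer_proj /psub /pscale.
by case: ifP => _ [-> ->]; case: t => [|t]; rewrite ?subrr ?scale0r ?add0r scale1r ?mulmxA.
Qed.

Lemma run_decrease t : f (x t.+1) <= f (x t) - 3 / 4 * eta * proj_sq t.
Proof.
set d := step_proj t (G (x t)).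
have := smooth_descent f_grad G_lip (x t) (pscale (- eta) d) L_gt0.
have -> : padd (x t) (pscale (- eta) d) = x t.+1.
  by rewrite run_step; apply: param_ext => l i j; rewrite /padd /psub /pscale !mxE; ring.
rewrite pinnerZr pinner_pproj_self ?psqnorm_scale ?sqrrN; last exact: run_orthonormal.
rewrite -/d -/(proj_sq t) => descent.
have small_step : L * (eta * L * (eta * proj_sq t)) <= L * (1 / 4 * (eta * proj_sq t)).
  apply: (ler_wpM2l (ltW L_gt0)).
  by apply: ler_wpM2r etaL_le; exact: mulr_ge0 (ltW eta_gt0) (proj_sq_ge0 t).
have : 2 * L * (f (x t.+1) - (f (x t) - 3 / 4 * eta * proj_sq t)) <= 0 by lra.
by rewrite pmulr_rle0 ?mulr_gt0 //; lra.
Qed.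

Lemma run_sum_decrease T : 3 / 4 * eta * \sum_(t < T) proj_sq t <= Delta f x0.
Proof.
have partial T' : 3 / 4 * eta * \sum_(t < T') proj_sq t <= f x0 - f (x T').
  elim: T' => [|T' IH]; first by rewrite big_ord0 (proj1 run) mulr0 subrr.
  by rewrite big_ord_recr /= mulrDr; have := run_decrease T'; lra.
have inf_le : inf (range f) <= f (x T).
  case: f_lb => b hb; apply: ge_inf; last by exists (x T).
  by exists b => _ [z _ <-].
by rewrite /Delta; have := partial T; lra.
Qed.

Lemma run_drift_le t : drift t <= (t %% tau)%:R * eta ^+ 2 * window_sum tau proj_sq t.
Proof.
elim: t => [|t IH]; first by rewrite last_reset0 psqnorm_subxx mod0n !mul0r.
rewrite last_resetS window_sumS modnS.
case: ifP => _; first by rewrite psqnorm_subxx !mul0r.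
rewrite run_step; set d := step_proj t (G (x t)).
have W_ge0 := window_sum_ge0 tau proj_sq_ge0 t.
have a_ge0 := proj_sq_ge0 t.
case k0 : (t %% tau)%N => [|k].
  have -> : psub (anchor t) (psub (x t) (pscale eta d)) = pscale eta d.
    by rewrite /last_reset k0 subn0; apply: param_ext => l i j; rewrite /psub /pscale !mxE; ring.
  rewrite psqnorm_scale mul1r -/(proj_sq t) mulrDr.
  by have := mulr_ge0 (sqr_ge0 eta) W_ge0; lra.
have -> : psub (anchor t) (psub (x t) (pscale eta d))
    = psub (psub (anchor t) (x t)) (pscale (- eta) d).
  by apply: param_ext => l i j; rewrite /psub /pscale !mxE; ring.
rewrite k0 in IH.
have k_gt0 : (0 : R) < k.+1%:R by rewrite ltr0n.
rewrite -(ler_pM2l k_gt0); apply: le_trans (psqnorm_sub_young _ _ (ltW k_gt0)) _.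
rewrite psqnorm_scale sqrrN -/(proj_sq t).
have -> : (k.+2%:R : R) = k.+1%:R + 1 by rewrite natr1.
move: (k.+1%:R : R) k_gt0 IH => kk kk_gt0 IH.
have kk1_ge0 : 0 <= kk + 1 by lra.
by have := ler_wpM2l kk1_ge0 IH; lra.
Qed.

Lemma run_grad_le t : dlt * psqnorm (G (x t)) <= 4 * proj_sq t + 6 * L ^+ 2 * drift t.
Proof.
set gt := G (x t); set gy := G (anchor t).
have orth := run_orthonormal t.
have split_t := psqnorm_le_split gt gy.
have split_y := psqnorm_le_split (step_proj t gy) (step_proj t gt).
have lip_t : psqnorm (psub gt gy) <= L ^+ 2 * drift t.
  by rewrite psqnorm_subC; exact: lipschitz_grad_sq.
have lip_y : psqnorm (psub (step_proj t gy) (step_proj t gt)) <= L ^+ 2 * drift t.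
  by rewrite -pprojB; apply: le_trans (psqnorm_pproj_le orth _) _; exact: lipschitz_grad_sq.
have cap := run_anchor_capture t.
have := ler_wpM2l (ltW dlt_gt0) split_t.
have : dlt * psqnorm (psub gt gy) <= psqnorm (psub gt gy) by rewrite ler_piMl ?psqnorm_ge0.
rewrite /proj_sq -/gt; lra.
Qed.

Lemma run_sum_drift_le T :
  \sum_(t < T) drift t <= (tau%:R * eta) ^+ 2 * \sum_(t < T) proj_sq t.
Proof.
apply: le_trans (_ : \sum_(t < T) tau%:R * eta ^+ 2 * window_sum tau proj_sq t <= _).
  apply: ler_sum => t _; apply: le_trans (run_drift_le t) _.
  apply: ler_wpM2r; first exact: window_sum_ge0.
  by apply: ler_wpM2r; rewrite ?sqr_ge0 // ler_nat ltnW // ltn_pmod.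
rewrite -mulr_sumr.
have := ler_wpM2l (mulr_ge0 (ler0n R tau) (sqr_ge0 eta)) (sum_window_sum_le proj_sq_ge0 T tau_gt0).
by rewrite exprMn; lra.
Qed.

Lemma run_rate T : dlt * eta * \sum_(t < T) psqnorm (G (x t)) <= 40 / 3 * Delta f x0.
Proof.
set S := \sum_(t < T) psqnorm (G (x t)); set A := \sum_(t < T) proj_sq t.
have A_ge0 : 0 <= A by apply: sumr_ge0.
have sum_grad : dlt * S <= 4 * A + 6 * L ^+ 2 * \sum_(t < T) drift t.
  rewrite /S /A mulr_sumr !mulr_sumr -big_split /=.
  by apply: ler_sum => t _; exact: run_grad_le.
have drift_small : L ^+ 2 * \sum_(t < T) drift t <= A.
  apply: le_trans (ler_wpM2l (sqr_ge0 L) (run_sum_drift_le T)) _.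
  rewrite mulrA -exprMn; apply: ler_piMl => //.
  have -> : L * (tau%:R * eta) = eta * L * tau%:R by ring.
  by rewrite expr_le1 // mulr_ge0 ?ler0n // mulr_ge0 ?ltW.
have := ler_wpM2l (ltW eta_gt0) sum_grad.
have := run_sum_decrease T; rewrite -/A.
have := mulr_ge0 (ltW eta_gt0) A_ge0.
have := ler_wpM2l (ltW eta_gt0) drift_small.
lra.
Qed.

End DeterministicRun.

Section DeltaMin.
Variables (R : realType) (NL : nat) (m n r : 'I_NL -> nat).

Lemma delta_min_le l : delta_min R m n r <= (r l)%:R / (minn (m l) (n l))%:R.
Proof. exact: bigmin_le. Qed.

Lemma delta_min_le1 : delta_min R m n r <= 1.
Proof. exact: bigmin_le_id. Qed.

Lemma delta_min_gt0 :
  (forall l, (0 < r l)%N /\ (r l < minn (m l) (n l))%N) -> 0 < delta_min R m n r.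
Proof.
move=> hr; apply: (big_ind (fun v => 0 < v)) => // [a b a0 b0 | l _].
  by rewrite lt_min a0 b0.
have [r0 rmin] := hr l; rewrite divr_gt0 // ltr0n //.
exact: ltn_trans rmin.
Qed.

End DeltaMin.

Lemma ceil_nat_bounds (R : realType) (y : R) (k : nat) :
  0 < y -> (k : int) = Num.ceil y -> (0 < k)%N /\ k%:R <= y + 1.
Proof.
move=> y_gt0 hk; have := ceil_itv y; rewrite -hk intrB /= => /andP[lt_k le_k].
by split; [rewrite -(ltr0n R); apply: lt_le_trans le_k | lra].
Qed.

Definition galore_stepsize_inv (R : realType) (L dlt tau : R) : R :=
  4 * L + Num.sqrt (80 * L ^+ 2 / (3 * dlt))
    + Num.sqrt (80 * tau ^+ 2 * L ^+ 2 / (3 * dlt)) + Num.sqrt (16 * tau * L ^+ 2 / 3).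

Lemma sqrtr_le_of_sqr (R : rcfType) (a b : R) : 0 <= b -> a <= b ^+ 2 -> Num.sqrt a <= b.
Proof. by move=> b0 h; rewrite -(ger0_norm b0) -sqrtr_sqr ler_sqrt // sqr_ge0. Qed.

Section Stepsize.
Variables (R : realType) (L dlt tau : R).
Hypotheses (dlt_gt0 : 0 < dlt) (dlt_le1 : dlt <= 1) (tau_ge0 : 0 <= tau).

Lemma galore_stepsize_small (eta : R) : 0 < L ->
  eta = (galore_stepsize_inv L dlt tau)^-1 ->
  [/\ 0 < eta, eta * L <= 1 / 4 & eta * L * tau <= 1].
Proof.
move=> L_gt0 ->; rewrite /galore_stepsize_inv.
have tauL_ge0 : 0 <= tau * L by rewrite mulr_ge0 // ltW.
have tauL_le : tau * L <= Num.sqrt (80 * tau ^+ 2 * L ^+ 2 / (3 * dlt)).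
  rewrite -(ger0_norm tauL_ge0) -sqrtr_sqr ler_sqrt; last first.
    apply: divr_ge0; last by rewrite mulr_ge0 // ltW.
    by rewrite mulr_ge0 ?sqr_ge0 // mulr_ge0 ?sqr_ge0.
  have -> : 80 * tau ^+ 2 * L ^+ 2 / (3 * dlt) = (tau * L) ^+ 2 * (80 / (3 * dlt)).
    by rewrite exprMn; field; rewrite gt_eqF.
  apply: ler_peMr; first exact: sqr_ge0.
  by rewrite ler_pdivlMr ?mulr_gt0 //; have := dlt_le1; lra.
have := sqrtr_ge0 (80 * L ^+ 2 / (3 * dlt)); have := sqrtr_ge0 (16 * tau * L ^+ 2 / 3).
move: tauL_le; move: (Num.sqrt (80 * L ^+ 2 / (3 * dlt))) => s1.
move: (Num.sqrt (80 * tau ^+ 2 * L ^+ 2 / (3 * dlt))) => s2.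
move: (Num.sqrt (16 * tau * L ^+ 2 / 3)) => s3 tauL_le s3_ge0 s1_ge0.
have E_gt0 : 0 < 4 * L + s1 + s2 + s3 by lra.
split; first by rewrite invr_gt0.
  by rewrite mulrC ler_pdivrMr //; lra.
by rewrite -mulrA mulrC ler_pdivrMr // mul1r mulrC; lra.
Qed.

Lemma galore_stepsize_inv_le : 0 <= L -> tau <= 64 / (3 * dlt) + 1 ->
  galore_stepsize_inv L dlt tau <= 142 * L * (Num.sqrt dlt)^-1 ^+ 3.
Proof.
move=> L_ge0 tau_le; rewrite /galore_stepsize_inv.
set u := (Num.sqrt dlt)^-1.
have u_gt0 : 0 < u by rewrite invr_gt0 sqrtr_gt0.
have dlt_inv : dlt^-1 = u ^+ 2 by rewrite /u exprVn sqr_sqrtr // ltW.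
have v_ge1 : 1 <= u ^+ 2 by rewrite -dlt_inv invf_ge1.
set v := u ^+ 2 in v_ge1 dlt_inv.
have u3 : u ^+ 3 ^+ 2 = v ^+ 3 by rewrite -!exprM.
have v_le_v3 : v <= v ^+ 3.
  by rewrite exprS; apply: ler_peMr; [exact: le_trans ler01 v_ge1 | exact: exprn_ege1].
have u_ge1 : 1 <= u by rewrite -(@expr_ge1 _ 2) // ltW.
have v_ge0 : 0 <= v := le_trans ler01 v_ge1.
have div3dlt c : c / (3 * dlt) = c / 3 * v by rewrite -dlt_inv invfM mulrA.
have L2_ge0 : 0 <= L ^+ 2 := sqr_ge0 L.
have L2v := ler_wpM2l L2_ge0 v_le_v3.
have L2v3_ge0 := mulr_ge0 L2_ge0 (exprn_ge0 3 v_ge0).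
have K2 : (L * u ^+ 3) ^+ 2 = L ^+ 2 * v ^+ 3 by rewrite exprMn u3.
have K_ge0 : 0 <= L * u ^+ 3 by rewrite mulr_ge0 // exprn_ge0 // ltW.
have tau_v : tau <= 23 * v by move: tau_le; rewrite div3dlt; lra.
have s1_le : Num.sqrt (80 * L ^+ 2 / (3 * dlt)) <= 6 * (L * u ^+ 3).
  apply: sqrtr_le_of_sqr; first by rewrite mulr_ge0.
  by rewrite exprMn K2 div3dlt; lra.
have s2_le : Num.sqrt (80 * tau ^+ 2 * L ^+ 2 / (3 * dlt)) <= 120 * (L * u ^+ 3).
  apply: sqrtr_le_of_sqr; first by rewrite mulr_ge0.
  have := ler_wpM2l (mulr_ge0 L2_ge0 v_ge0) (ler_pM tau_ge0 tau_ge0 tau_v tau_v).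
  by rewrite exprMn K2 div3dlt; lra.
have s3_le : Num.sqrt (16 * tau * L ^+ 2 / 3) <= 12 * (L * u ^+ 3).
  apply: sqrtr_le_of_sqr; first by rewrite mulr_ge0.
  have := ler_wpM2r L2_ge0 tau_v.
  by rewrite exprMn K2; lra.
have L_le : L <= L * u ^+ 3 by apply: ler_peMr => //; exact: exprn_ege1.
lra.
Qed.

End Stepsize.

Lemma rate_of_stepsize (R : realType) (L D dlt E S T : R) :
  0 <= L -> 0 <= D -> 0 < dlt -> 0 < E -> 0 < T ->
  dlt * E^-1 * S <= 40 / 3 * D -> E <= 142 * L * (Num.sqrt dlt)^-1 ^+ 3 ->
  T^-1 * S <= 2000%:R * (L * D) / (dlt ^+ 2 * Num.sqrt dlt * T).
Proof.
move=> L_ge0 D_ge0 dlt_gt0 E_gt0 T_gt0 rate E_le.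
have : 0 < Num.sqrt dlt /\ dlt = Num.sqrt dlt ^+ 2 by rewrite sqrtr_gt0 sqr_sqrtr // ltW.
move: (Num.sqrt dlt) E_le => q E_le [q_gt0 dlt_q]; subst dlt.
have u_gt0 : 0 < q^-1 by rewrite invr_gt0.
have S_le : S <= 40 / 3 * D * (E * q^-1 ^+ 2).
  have -> : S = q ^+ 2 * E^-1 * S * (E * q^-1 ^+ 2).
    by field; rewrite !gt_eqF.
  by apply: ler_wpM2r => //; rewrite mulr_ge0 // ltW // exprn_gt0.
have -> : 2000%:R * (L * D) / (q ^+ 2 ^+ 2 * q * T) = T^-1 * (2000 * (L * D * q^-1 ^+ 5)).
  by field; rewrite !gt_eqF.
rewrite ler_pM2l ?invr_gt0 //.
have := ler_wpM2l (mulr_ge0 (divr_ge0 (ler0n R 40) (ler0n R 3)) D_ge0)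
  (ler_wpM2r (exprn_ge0 2 (ltW u_gt0)) E_le).
have := mulr_ge0 (mulr_ge0 L_ge0 D_ge0) (exprn_ge0 5 (ltW u_gt0)).
lra.
Qed.

Theorem theorem2 :
  exists C : nat,
  forall (R : realType) (NL : nat) (m n r : 'I_NL -> nat)
    (f : param R m n -> R) (G : param R m n -> param R m n) (L : R)
    (x0 : param R m n) (T tau : nat) (beta1 eta : R)
    (x : nat -> param R m n)
    (P : nat -> forall l : 'I_NL, 'M[R]_(m l, r l))
    (Q : nat -> forall l : 'I_NL, 'M[R]_(n l, r l))
    (Mp : nat -> forall l : 'I_NL, 'M[R]_(r l, n l))
    (Mq : nat -> forall l : 'I_NL, 'M[R]_(m l, r l)),
    (0 < NL)%N ->
    (forall l : 'I_NL, (0 < r l)%N /\ (r l < minn (m l) (n l))%N) ->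
    bounded_below f ->                          (* Assumption 1 *)
    is_gradient f G ->                          (* G = grad f *)
    lipschitz_grad G L ->                       (* Assumption 2 *)
    0 < Delta f x0 ->
    let dlt := delta_min R m n r in
    64 / (3 * dlt) <= T%:R ->
    beta1 = 1 ->
    (tau : int) = Num.ceil (64 / (3 * dlt * beta1)) ->
    eta = (4 * L + Num.sqrt (80 * L ^+ 2 / (3 * dlt * beta1 ^+ 2))
             + Num.sqrt (80 * tau%:R ^+ 2 * L ^+ 2 / (3 * dlt))
             + Num.sqrt (16 * tau%:R * L ^+ 2 / (3 * beta1)))^-1 ->
    galore_mp_det_run G eta beta1 tau x0 x P Q Mp Mq ->
    T%:R^-1 * (\sum_(t < T) psqnorm (G (x t)))
      <= C%:R * (L * Delta f x0) / (dlt ^+ 2 * Num.sqrt dlt * T%:R).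
Proof.
exists 2000%N => R NL m n r f G L x0 T tau beta1 eta x P Q Mp Mq NL0 hr f_lb f_grad G_lip
  Delta_gt0 dlt T_ge beta1_1 htau heta run.
subst beta1; rewrite !expr1n !mulr1 in htau heta.
have {}heta : eta = (galore_stepsize_inv L dlt tau%:R)^-1 := heta.
have dlt_gt0 : 0 < dlt := delta_min_gt0 R hr.
have dlt_le1 : dlt <= 1 := delta_min_le1 R m n r.
have dlt_le l : dlt <= (r l)%:R / (minn (m l) (n l))%:R := delta_min_le R m n r l.
clearbody dlt.
have T_gt0 : 0 < T%:R :> R by apply: lt_le_trans T_ge; rewrite divr_gt0 // mulr_gt0.
have L_ge0 : 0 <= L.
  have [r0] := hr (Ordinal NL0); rewrite leq_min => /andP[rm rn].
  exact: (lipschitz_grad_ge0 G_lip (l := Ordinal NL0) (ltn_trans r0 rm) (ltn_trans r0 rn)).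
move: L_ge0; rewrite le_eqVlt => /orP[/eqP L0 | L_gt0].
  rewrite -L0 mul0r mulr0 mul0r pmulr_rle0 ?invr_gt0 //.
  by apply: sumr_le0 => t _; exact: lipschitz0_psqnorm_grad_le0 f_grad G_lip _ (esym L0) f_lb.
have y_gt0 : 0 < 64 / (3 * dlt) by rewrite divr_gt0 // mulr_gt0.
have [tau_gt0 tau_le] := ceil_nat_bounds y_gt0 htau.
have [eta_gt0 etaL etaLtau] := galore_stepsize_small dlt_gt0 dlt_le1 (ler0n R tau) L_gt0 heta.
have E_gt0 : 0 < galore_stepsize_inv L dlt tau%:R by rewrite -invr_gt0 -heta.
apply: (rate_of_stepsize (ltW L_gt0) (ltW Delta_gt0) dlt_gt0 E_gt0 T_gt0).
  rewrite -heta; exact: run_rate hr f_lb f_grad G_lip L_gt0 dlt_gt0 dlt_le1 dlt_le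
    tau_gt0 eta_gt0 etaL etaLtau run T.
exact: galore_stepsize_inv_le dlt_gt0 dlt_le1 (ler0n R tau) (ltW L_gt0) tau_le.
Qed.
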